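(* The Open CbNeed reduction $\to_{\mathrm{ond}}$ on programs is deterministic: if $p\to_{\mathrm{ond}} q$ and $p\to_{\mathrm{ond}} q'$ then $q=q'$ (up to $\alpha$-renaming).
   Context: Syntax (split presentation). Terms: $t,u,s ::= x \mid \lambda x.t \mid t\,u$. Values: $v ::= \lambda x.t$ (variables are not values). Environments: $E ::= \epsilon \mid E[x\leftarrow t]$. Programs: $p ::= (t,E)$. In $E[x\leftarrow t]$ and $(u,E[x\leftarrow t])$ the variable $x$ is bound in $E$ and $u$; everything is up to $\alpha$-renaming, appended ES bind fresh variables. Appending: $(t,E)@[x\leftarrow u] := (t,E[x\leftarrow u])$. Inert terms and fireballs: $i ::= x \mid i\,f$, $f ::= v \mid i$. Open term evaluation contexts: $\mathcal{H} ::= \langle\cdot\rangle \mid \mathcal{H}\,t \mid i\,\mathcal{H}$. Term contexts: $C ::= \langle\cdot\rangle \mid C\,t \mid t\,C$. Environment contexts: $G ::= E[x\leftarrow C] \mid G[x\leftarrow u]$. Program contexts: $P ::= (C,E) \mid (t,G)$, with $(C,E)@[x\leftarrow u] := (C,E[x\leftarrow u])$, $(t,G)@[x\leftarrow u] := (t,G[x\leftarrow u])$. Plugging: $(C,E)\langle (t,E')\rangle := (C\langle t\rangle, E'E)$; $(u,E[x\leftarrow C])\langle (t,E')\rangle := (u, E[x\leftarrow C\langle t\rangle]E')$; $(u,G[x\leftarrow s])\langle (t,E)\rangle := ((u,G)\langle(t,E)\rangle)@[x\leftarrow s]$; $P\langle t\rangle := P\langle (t,\epsilon)\rangle$. For $p=(t,E)$,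 $p@[x\leftarrow\mathcal{H}]$ denotes the program context $(t,E[x\leftarrow\mathcal{H}])$. Look-up $P(x)$: $P(x)=t$ if the list of ES of $P$ contains $[x\leftarrow t]$ with $t$ a term, and $P(x)=\bot$ otherwise. $v^{\alpha}$ denotes a copy of $v$ with bound variables renamed to fresh ones. Needed variables: $nv(x)=\{x\}$, $nv(\lambda x.t)=\emptyset$, $nv(t\,u)=nv(t)\cup nv(u)$; $nv((t,\epsilon))=nv(t)$, $nv((t,E[x\leftarrow u]))=nv((t,E))$ if $x\notin nv((t,E))$, else $(nv((t,E))\setminus\{x\})\cup nv(u)$; $nv(\langle\cdot\rangle)=\emptyset$, $nv(\mathcal{H}\,t)=nv(\mathcal{H})$, $nv(i\,\mathcal{H})=nv(i)\cup nv(\mathcal{H})$. Open evaluation contexts $P\in\mathcal{E}_{{\mathcal{V}}}$, inductively: $(\mathcal{H},\epsilon)\in\mathcal{E}_{nv(\mathcal{H})}$; if $P\in\mathcal{E}_{{\mathcal{V}}}$, $x\in{\mathcal{V}}$, $i$ inert then $P@[x\leftarrow i]\in\mathcal{E}_{({\mathcal{V}}\setminus\{x\})\cup nv(i)}$; if $P\in\mathcal{E}_{{\mathcal{V}}}$, $x\notin{\mathcal{V}}$ then $P@[x\leftarrow t]\in\mathcal{E}_{{\mathcal{V}}}$; if $P\in\mathcal{E}_{{\mathcal{V}}}$, $x\notin{\mathcal{V}}$ then $P\langle x\rangle@[x\leftarrow\mathcal{H}]\in\mathcal{E}_{{\mathcal{V}}\cup nv(\mathcal{H})}$ ($x$ not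 in the domain of $P$). Open CbNeed rules, for $P\in\mathcal{E}_{{\mathcal{V}}}$ for some ${\mathcal{V}}$: $P\langle(\lambda x.t)u\rangle \to_{\mathrm{om}} P\langle (t,[x\leftarrow u])\rangle$; $P\langle x\rangle\to_{\mathrm{oe}} P\langle v^{\alpha}\rangle$ if $P(x)=v$. $\to_{\mathrm{ond}} := \to_{\mathrm{om}}\cup\to_{\mathrm{oe}}$. *)

From Stdlib Require Import List Arith.
Import ListNotations.

Definition var := nat.

Inductive term : Type :=
| Var : var -> term
| Lam : var -> term -> term
| App : term -> term -> term.

Inductive env : Type :=
| Eps : env
| ESnoc : env -> var -> term -> env.

Definition prog : Type := (term * env)%type.

(* Concatenation E' E (E' innermost, E outermost). *)
Fixpoint env_cat (E' E : env) : env :=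
  match E with
  | Eps => E'
  | ESnoc E0 x t => ESnoc (env_cat E' E0) x t
  end.

Definition is_value (t : term) : Prop :=
  match t with Lam _ _ => True | _ => False end.

Inductive inert : term -> Prop :=
| inert_var : forall x, inert (Var x)
| inert_app : forall i f, inert i -> fireball f -> inert (App i f)
with fireball : term -> Prop :=
| fb_value : forall v, is_value v -> fireball v
| fb_inert : forall i, inert i -> fireball i.

Inductive tctx : Type :=
| Hole : tctx
| CAppL : tctx -> term -> tctx
| CAppR : term -> tctx -> tctx.

Fixpoint plug_t (C : tctx) (t : term) : term :=
  match C with
  | Hole => t
  | CAppL C0 u => App (plug_t C0 t) u
  | CAppR u C0 => App u (plug_t C0 t)
  end.

Inductive is_H : tctx -> Prop :=
| isH_hole : is_H Hole
| isH_appl : forall H t, is_H H -> is_H (CAppL H t)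
| isH_appr : forall i H, inert i -> is_H H -> is_H (CAppR i H).

Inductive gctx : Type :=
| GHere : env -> var -> tctx -> gctx
| GSnoc : gctx -> var -> term -> gctx.

Inductive pctx : Type :=
| PTerm : tctx -> env -> pctx
| PEnv : term -> gctx -> pctx.

Definition prog_app (p : prog) (x : var) (u : term) : prog :=
  (fst p, ESnoc (snd p) x u).

Definition pctx_app (P : pctx) (x : var) (u : term) : pctx :=
  match P with
  | PTerm C E => PTerm C (ESnoc E x u)
  | PEnv t G => PEnv t (GSnoc G x u)
  end.

Definition prog_app_ctx (p : prog) (x : var) (H : tctx) : pctx :=
  PEnv (fst p) (GHere (snd p) x H).

Fixpoint plug_g (u : term) (G : gctx) (p : prog) : prog :=
  match G with
  | GHere E x C => (u, env_cat (ESnoc E x (plug_t C (fst p))) (snd p))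
  | GSnoc G0 x s => prog_app (plug_g u G0 p) x s
  end.

Definition plug (P : pctx) (p : prog) : prog :=
  match P with
  | PTerm C E => (plug_t C (fst p), env_cat (snd p) E)
  | PEnv u G => plug_g u G p
  end.

Definition plug_term (P : pctx) (t : term) : prog := plug P (t, Eps).

(* Explicit substitutions of a context whose content is a term
   (the ES containing the hole is excluded). *)
Fixpoint es_env (E : env) : list (var * term) :=
  match E with
  | Eps => []
  | ESnoc E0 x t => (x, t) :: es_env E0
  end.

Fixpoint es_g (G : gctx) : list (var * term) :=
  match G with
  | GHere E _ _ => es_env E
  | GSnoc G0 x u => (x, u) :: es_g G0
  end.

Definition es_pctx (P : pctx) : list (var * term) :=
  match P with
  | PTerm _ E => es_env E
  | PEnv _ G => es_g G
  end.

Definition lookup (P : pctx) (x : var) (t : term) : Prop :=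
  In (x, t) (es_pctx P).

(* Domain of a program context (all variables bound by its ES,
   including the one containing the hole). *)
Fixpoint dom_env (E : env) : list var :=
  match E with
  | Eps => []
  | ESnoc E0 x _ => x :: dom_env E0
  end.

Fixpoint dom_g (G : gctx) : list var :=
  match G with
  | GHere E x _ => x :: dom_env E
  | GSnoc G0 x _ => x :: dom_g G0
  end.

Definition dom_pctx (P : pctx) : list var :=
  match P with
  | PTerm _ E => dom_env E
  | PEnv _ G => dom_g G
  end.

Fixpoint nv_t (z : var) (t : term) : Prop :=
  match t with
  | Var x => z = x
  | Lam _ _ => False
  | App t1 t2 => nv_t z t1 \/ nv_t z t2
  end.

Fixpoint nv_env (z : var) (t : term) (E : env) : Prop :=
  match E with
  | Eps => nv_t z t
  | ESnoc E0 x u =>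
      (nv_env z t E0 /\ z <> x) \/ (nv_env x t E0 /\ nv_t z u)
  end.

Definition nv_prog (z : var) (p : prog) : Prop := nv_env z (fst p) (snd p).

Fixpoint nv_ctx (z : var) (C : tctx) : Prop :=
  match C with
  | Hole => False
  | CAppL C0 _ => nv_ctx z C0
  | CAppR i C0 => nv_t z i \/ nv_ctx z C0
  end.

(* Open evaluation contexts: evctx V P  means  P \in E_V. *)
Inductive evctx : (var -> Prop) -> pctx -> Prop :=
| ev_base : forall H, is_H H ->
    evctx (fun z => nv_ctx z H) (PTerm H Eps)
| ev_inert : forall V P x i, evctx V P -> V x -> inert i ->
    evctx (fun z => (V z /\ z <> x) \/ nv_t z i) (pctx_app P x i)
| ev_garbage : forall V P x t, evctx V P -> ~ V x ->
    evctx V (pctx_app P x t)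
| ev_hole : forall V P x H, evctx V P -> ~ V x -> ~ In x (dom_pctx P) ->
    is_H H ->
    evctx (fun z => V z \/ nv_ctx z H) (prog_app_ctx (plug_term P (Var x)) x H).

Fixpoint aeq_var (G : list (var * var)) (x y : var) : Prop :=
  match G with
  | [] => x = y
  | (a, b) :: G0 => (x = a /\ y = b) \/ (x <> a /\ y <> b /\ aeq_var G0 x y)
  end.

Fixpoint aeq (G : list (var * var)) (t t' : term) : Prop :=
  match t, t' with
  | Var x, Var y => aeq_var G x y
  | Lam x b, Lam y b' => aeq ((x, y) :: G) b b'
  | App t1 t2, App u1 u2 => aeq G t1 u1 /\ aeq G t2 u2
  | _, _ => False
  end.

(* In (t, E[x<-u]), x is bound in t and E, not in u. *)
Fixpoint aeq_env (G : list (var * var)) (t : term) (E : env)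
                 (t' : term) (E' : env) : Prop :=
  match E, E' with
  | Eps, Eps => aeq G t t'
  | ESnoc E0 x u, ESnoc E0' y u' =>
      aeq G u u' /\ aeq_env ((x, y) :: G) t E0 t' E0'
  | _, _ => False
  end.

Definition aeq_prog (p q : prog) : Prop :=
  aeq_env [] (fst p) (snd p) (fst q) (snd q).

Fixpoint bv_t (t : term) : list var :=
  match t with
  | Var _ => []
  | Lam x b => x :: bv_t b
  | App t1 t2 => bv_t t1 ++ bv_t t2
  end.

Fixpoint bv_env (E : env) : list var :=
  match E with
  | Eps => []
  | ESnoc E0 x u => x :: bv_t u ++ bv_env E0
  end.

Definition bv_prog (p : prog) : list var := bv_t (fst p) ++ bv_env (snd p).

Fixpoint fv_t (z : var) (t : term) : Prop :=
  match t with
  | Var x => z = x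
  | Lam x b => fv_t z b /\ z <> x
  | App t1 t2 => fv_t z t1 \/ fv_t z t2
  end.

Fixpoint fv_env (z : var) (t : term) (E : env) : Prop :=
  match E with
  | Eps => fv_t z t
  | ESnoc E0 x u => (fv_env z t E0 /\ z <> x) \/ fv_t z u
  end.

Definition fv_prog (z : var) (p : prog) : Prop := fv_env z (fst p) (snd p).

Definition well_named (p : prog) : Prop :=
  NoDup (bv_prog p) /\ (forall x, In x (bv_prog p) -> ~ fv_prog x p).

Inductive ond_raw : prog -> prog -> Prop :=
| om_step : forall V P x t u, evctx V P ->
    ond_raw (plug_term P (App (Lam x t) u)) (plug P (t, ESnoc Eps x u))
| oe_step : forall V P x v v', evctx V P -> lookup P x v -> is_value v ->
    aeq [] v v' ->  (* v' = v^alpha, a renamed copy of v *)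
    ond_raw (plug_term P (Var x)) (plug_term P v').

(* ->ond on programs up to alpha-renaming: fire a rule on a well-named
   alpha-representative. *)
Definition ond (p q : prog) : Prop :=
  exists p0 q0, aeq_prog p p0 /\ well_named p0 /\ ond_raw p0 q0 /\ aeq_prog q0 q.

(* Determinism is first proved on one well-named representative.  There the redex position
   is unique: two decompositions P1<s1> = P2<s2> by open evaluation contexts either coincide,
   or one redex is a variable needed by the other context; a needed variable is free in the
   program, so in a well-named program it has no substitution to look up.  Two well-named
   alpha-equivalent representatives differ by an injective renaming that fixes the free
   variables.  Reduction commutes with renaming and creates no free variables, so the reduct
   of one representative is alpha-equivalent to its renaming, a reduct of the other. *)

From Stdlib Require Import List Arith.
Import ListNotations.

(** * Lists and finite permutations of variables *)

Lemma app_inj_length {A : Type} (l1 l2 l1' l2' : list A) :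
  l1 ++ l2 = l1' ++ l2' -> length l1 = length l1' -> l1 = l1' /\ l2 = l2'.
Proof.
  revert l1'; induction l1 as [|a l1 IH]; intros [|a' l1'] Heq Hlen;
    try discriminate; auto.
  injection Heq as -> Heq; injection Hlen as Hlen.
  destruct (IH l1' Heq Hlen) as [-> ->]; auto.
Qed.

Definition swap (a b z : var) : var :=
  if Nat.eqb z a then b else if Nat.eqb z b then a else z.

Lemma swap_r (a b : var) : swap a b b = a.
Proof.
  unfold swap; destruct (Nat.eqb_spec b a); [auto | rewrite Nat.eqb_refl; auto].
Qed.

Lemma swap_id (a b z : var) : z <> a -> z <> b -> swap a b z = z.
Proof.
  intros Ha Hb; unfold swap.
  destruct (Nat.eqb_spec z a); [contradiction|].
  destruct (Nat.eqb_spec z b); [contradiction | reflexivity].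
Qed.

Lemma swap_involutive (a b z : var) : swap a b (swap a b z) = z.
Proof.
  unfold swap.
  destruct (Nat.eqb_spec z a); [|destruct (Nat.eqb_spec z b)];
    repeat match goal with |- context [Nat.eqb ?x ?y] => destruct (Nat.eqb_spec x y) end;
    congruence.
Qed.

Lemma swap_inj (a b x y : var) : swap a b x = swap a b y -> x = y.
Proof.
  intro H; rewrite <- (swap_involutive a b x), <- (swap_involutive a b y), H.
  reflexivity.
Qed.

Lemma NoDup_map_onto (X Y : list var) :
  NoDup X -> NoDup Y -> length X = length Y ->
  exists f : var -> var, (forall x y, f x = f y -> x = y) /\ map f X = Y /\
    (forall z, ~ In z X -> ~ In z Y -> f z = z).
Proof.
  revert Y; induction X as [|x X IH]; intros [|y Y] NX NY Hlen;
    try discriminate.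
  - exists (fun z => z); repeat split; auto.
  - injection Hlen as Hlen.
    inversion NX as [|? ? Hx NX']; inversion NY as [|? ? Hy NY']; subst.
    destruct (IH Y NX' NY' Hlen) as [f [f_inj [Hmap Hfix]]].
    exists (fun z => swap y (f x) (f z)); split; [|split].
    + intros a b Hab; apply f_inj, (swap_inj _ _ _ _ Hab).
    + simpl; rewrite swap_r; f_equal.
      rewrite <- Hmap; apply map_ext_in; intros a Ha; apply swap_id.
      * intro E; apply Hy; rewrite <- E, <- Hmap; apply in_map; exact Ha.
      * intro E; apply f_inj in E; subst; contradiction.
    + intros z Hz1 Hz2.
      assert (Hfz : f z = z) by (apply Hfix; intro; [apply Hz1 | apply Hz2]; right; auto).
      rewrite Hfz; apply swap_id; [intro; apply Hz2; left; auto|].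
      intro E; rewrite <- Hfz in E; apply f_inj in E; apply Hz1; left; auto.
Qed.

(** * Plugging, domains and well-named programs *)

Lemma env_cat_Eps_l (E : env) : env_cat Eps E = E.
Proof. induction E as [|E IH x u]; simpl; congruence. Qed.

Lemma plug_term_pctx_app (P : pctx) (x : var) (u s : term) :
  plug_term (pctx_app P x u) s = prog_app (plug_term P s) x u.
Proof. destruct P; reflexivity. Qed.

Lemma plug_term_prog_app_ctx (p : prog) (x : var) (H : tctx) (s : term) :
  plug_term (prog_app_ctx p x H) s = (fst p, ESnoc (snd p) x (plug_t H s)).
Proof. reflexivity. Qed.

Lemma dom_plug_term (P : pctx) (s : term) :
  dom_env (snd (plug_term P s)) = dom_pctx P.
Proof.
  destruct P as [C E|u G]; simpl.
  - rewrite env_cat_Eps_l; reflexivity.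
  - induction G as [E x C|G IH x w]; simpl; congruence.
Qed.

Lemma lookup_plug_term (P : pctx) (s : term) (x : var) (v : term) :
  lookup P x v -> In (x, v) (es_env (snd (plug_term P s))).
Proof.
  unfold lookup; destruct P as [C E|u G]; simpl.
  - rewrite env_cat_Eps_l; auto.
  - induction G as [E y C|G IH y w]; simpl; [auto|].
    intros [Hxv|Hxv]; auto.
Qed.

Lemma es_env_dom (E : env) (x : var) (v : term) :
  In (x, v) (es_env E) -> In x (dom_env E).
Proof.
  induction E as [|E IH y w]; simpl; [tauto|].
  intros [Hxv|Hxv]; [injection Hxv as -> _; left | right]; auto.
Qed.

Lemma dom_env_bv (E : env) (x : var) : In x (dom_env E) -> In x (bv_env E).
Proof.
  induction E as [|E IH y w]; simpl; [tauto|].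
  intros [->|Hx]; [left | right; apply in_or_app; right]; auto.
Qed.

Lemma NoDup_dom_env (E : env) : NoDup (bv_env E) -> NoDup (dom_env E).
Proof.
  induction E as [|E IH y w]; simpl; intro ND; [constructor|].
  inversion ND as [|? ? Hy ND']; subst.
  constructor.
  - intro Hin; apply Hy, in_or_app; right; apply dom_env_bv; exact Hin.
  - apply IH; eapply NoDup_app_remove_l; eauto.
Qed.

Lemma es_env_functional (E : env) (x : var) (v1 v2 : term) :
  NoDup (bv_env E) -> In (x, v1) (es_env E) -> In (x, v2) (es_env E) -> v1 = v2.
Proof.
  intro ND; apply NoDup_dom_env in ND; revert ND.
  induction E as [|E IH y w]; simpl; [tauto|].
  intros ND H1 H2; inversion ND as [|? ? Hy ND']; subst.
  destruct H1 as [H1|H1], H2 as [H2|H2].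
  - congruence.
  - injection H1 as -> ->; exfalso; eapply Hy, es_env_dom; eauto.
  - injection H2 as -> ->; exfalso; eapply Hy, es_env_dom; eauto.
  - eauto.
Qed.

Lemma well_named_NoDup_env (p : prog) : well_named p -> NoDup (bv_env (snd p)).
Proof. intros [ND _]; eapply NoDup_app_remove_l; exact ND. Qed.

Lemma well_named_bound_not_free (p : prog) (x : var) :
  well_named p -> In x (dom_env (snd p)) -> ~ fv_prog x p.
Proof.
  intros [_ Hfree] Hx; apply Hfree, in_or_app; right; apply dom_env_bv; exact Hx.
Qed.

(** * Alpha-equivalence *)

Definition swap_pair (p : var * var) : var * var := (snd p, fst p).

Lemma aeq_var_sym (G : list (var * var)) (x y : var) :
  aeq_var G x y -> aeq_var (map swap_pair G) y x.
Proof.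
  revert x y; induction G as [|[a b] G IH]; simpl; intros x y H; auto.
  destruct H as [[-> ->]|[Ha [Hb H]]]; auto.
Qed.

Lemma aeq_sym (G : list (var * var)) (t t' : term) :
  aeq G t t' -> aeq (map swap_pair G) t' t.
Proof.
  revert G t'; induction t as [x|x b IH|a IHa b IHb]; intros G [y|y b'|a' b'] H;
    simpl in *; try contradiction.
  - apply aeq_var_sym; exact H.
  - apply (IH ((x, y) :: G)); exact H.
  - destruct H; split; auto.
Qed.

Lemma aeq_env_sym (G : list (var * var)) (t : term) (E : env) (t' : term) (E' : env) :
  aeq_env G t E t' E' -> aeq_env (map swap_pair G) t' E' t E.
Proof.
  revert G t' E'; induction E as [|E IH x u]; intros G t' [|E' y u'] H;
    simpl in *; try contradiction.
  - apply aeq_sym; exact H.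
  - destruct H as [Hu HE]; split;
      [apply aeq_sym; exact Hu | apply (IH ((x, y) :: G)); exact HE].
Qed.

Lemma aeq_prog_sym (p q : prog) : aeq_prog p q -> aeq_prog q p.
Proof. apply (aeq_env_sym []). Qed.

Inductive compose : list (var * var) -> list (var * var) -> list (var * var) -> Prop :=
| compose_nil : compose [] [] []
| compose_cons a b c G1 G2 G3 :
    compose G1 G2 G3 -> compose ((a, b) :: G1) ((b, c) :: G2) ((a, c) :: G3).

Lemma aeq_var_trans (G1 G2 G3 : list (var * var)) (x y z : var) :
  compose G1 G2 G3 -> aeq_var G1 x y -> aeq_var G2 y z -> aeq_var G3 x z.
Proof.
  intro HG; revert x y z; induction HG; simpl; intros x y z H1 H2; [congruence|].
  destruct H1 as [[-> ->]|[? [? ?]]], H2 as [[? ->]|[? [? ?]]]; try tauto.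
  right; eauto.
Qed.

Lemma aeq_trans (G1 G2 G3 : list (var * var)) (t t' t'' : term) :
  compose G1 G2 G3 -> aeq G1 t t' -> aeq G2 t' t'' -> aeq G3 t t''.
Proof.
  revert G1 G2 G3 t' t''; induction t as [x|x b IH|a IHa b IHb];
    intros G1 G2 G3 [y|y b'|a' b'] [z|z b''|a'' b''] HG H1 H2;
    simpl in *; try contradiction.
  - eapply aeq_var_trans; eauto.
  - eapply IH; [constructor; exact HG | exact H1 | exact H2].
  - destruct H1, H2; split; eauto.
Qed.

Lemma aeq_env_trans (G1 G2 G3 : list (var * var)) (t t' t'' : term) (E E' E'' : env) :
  compose G1 G2 G3 ->
  aeq_env G1 t E t' E' -> aeq_env G2 t' E' t'' E'' -> aeq_env G3 t E t'' E''.
Proof.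
  revert G1 G2 G3 E' E''; induction E as [|E IH x u];
    intros G1 G2 G3 [|E' y u'] [|E'' z u''] HG H1 H2; simpl in *; try contradiction.
  - eapply aeq_trans; eauto.
  - destruct H1, H2; split; [eapply aeq_trans; eauto|].
    eapply IH; [constructor; exact HG | eauto | eauto].
Qed.

Lemma aeq_prog_trans (p q r : prog) : aeq_prog p q -> aeq_prog q r -> aeq_prog p r.
Proof. apply aeq_env_trans; constructor. Qed.

Definition identity_ctx (G : list (var * var)) : Prop := Forall (fun p => fst p = snd p) G.

Lemma identity_ctx_cons (G : list (var * var)) (x : var) :
  identity_ctx G -> identity_ctx ((x, x) :: G).
Proof. constructor; auto. Qed.

Lemma aeq_var_refl (G : list (var * var)) (x : var) : identity_ctx G -> aeq_var G x x.
Proof.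
  induction G as [|[a b] G IH]; simpl; intro HG; auto.
  inversion HG as [|? ? Hab HG']; simpl in Hab; subst.
  destruct (Nat.eq_dec x b); [left | right]; auto.
Qed.

Lemma aeq_refl (G : list (var * var)) (t : term) : identity_ctx G -> aeq G t t.
Proof.
  revert G; induction t; simpl; intros G HG.
  - apply aeq_var_refl; exact HG.
  - apply IHt, identity_ctx_cons, HG.
  - split; auto.
Qed.

Lemma aeq_env_refl (G : list (var * var)) (t : term) (E : env) :
  identity_ctx G -> aeq_env G t E t E.
Proof.
  revert G; induction E; simpl; intros G HG.
  - apply aeq_refl; exact HG.
  - split; [apply aeq_refl | apply IHE, identity_ctx_cons]; exact HG.
Qed.

Lemma aeq_prog_refl (p : prog) : aeq_prog p p.
Proof. apply aeq_env_refl; constructor. Qed.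

Lemma aeq_var_weaken (G G' : list (var * var)) (x y : var) :
  identity_ctx G -> aeq_var G' x y -> aeq_var (G' ++ G) x y.
Proof.
  revert x y; induction G' as [|[a b] G' IH]; simpl; intros x y HG H.
  - subst; apply aeq_var_refl; exact HG.
  - destruct H as [H|[? [? H]]]; auto.
Qed.

Lemma aeq_weaken (G G' : list (var * var)) (t t' : term) :
  identity_ctx G -> aeq G' t t' -> aeq (G' ++ G) t t'.
Proof.
  revert G' t'; induction t as [x|x b IH|a IHa b IHb]; intros G' [y|y b'|a' b'] HG H;
    simpl in *; try contradiction.
  - apply aeq_var_weaken; assumption.
  - apply (IH ((x, y) :: G')); assumption.
  - destruct H; split; auto.
Qed.

Lemma aeq_plug_t (G : list (var * var)) (C : tctx) (a b : term) :
  identity_ctx G -> aeq [] a b -> aeq G (plug_t C a) (plug_t C b).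
Proof.
  intros HG Hab; induction C; simpl.
  - apply (aeq_weaken G []); assumption.
  - split; [|apply aeq_refl]; assumption.
  - split; [apply aeq_refl|]; assumption.
Qed.

Lemma aeq_env_plug_t (G : list (var * var)) (C : tctx) (E : env) (a b : term) :
  identity_ctx G -> aeq [] a b -> aeq_env G (plug_t C a) E (plug_t C b) E.
Proof.
  revert G; induction E; simpl; intros G HG Hab.
  - apply aeq_plug_t; assumption.
  - split; [apply aeq_refl | apply IHE; [apply identity_ctx_cons|]]; assumption.
Qed.

Lemma aeq_env_plug_g (G : list (var * var)) (u : term) (Gc : gctx) (a b : term) :
  identity_ctx G -> aeq [] a b ->
  aeq_env G (fst (plug_g u Gc (a, Eps))) (snd (plug_g u Gc (a, Eps)))
            (fst (plug_g u Gc (b, Eps))) (snd (plug_g u Gc (b, Eps))).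
Proof.
  revert G; induction Gc as [E x C|Gc IH x w]; simpl; intros G HG Hab.
  - split; [apply aeq_plug_t | apply aeq_env_refl, identity_ctx_cons]; assumption.
  - split; [apply aeq_refl | apply IH; [apply identity_ctx_cons|]]; assumption.
Qed.

Lemma aeq_plug_term (P : pctx) (a b : term) :
  aeq [] a b -> aeq_prog (plug_term P a) (plug_term P b).
Proof.
  intro Hab; destruct P as [C E|u Gc]; unfold aeq_prog, plug_term, plug; simpl.
  - rewrite env_cat_Eps_l; apply aeq_env_plug_t; [constructor | exact Hab].
  - apply aeq_env_plug_g; [constructor | exact Hab].
Qed.

Lemma aeq_var_free (G : list (var * var)) (x y : var) :
  aeq_var G x y -> ~ In x (map fst G) -> y = x /\ ~ In x (map snd G).
Proof.
  revert x y; induction G as [|[a b] G IH]; simpl; intros x y H Hx.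
  - auto.
  - destruct H as [[-> ->]|[Ha [Hb H]]]; [tauto|].
    destruct (IH x y H) as [-> Hsnd]; [tauto|].
    split; [reflexivity | intros [->|?]; tauto].
Qed.

Lemma aeq_fv (G : list (var * var)) (t t' : term) (z : var) :
  aeq G t t' -> fv_t z t -> ~ In z (map fst G) -> fv_t z t' /\ ~ In z (map snd G).
Proof.
  revert G t'; induction t as [x|x b IH|a IHa b IHb]; intros G [y|y b'|a' b'] H Hz Hn;
    simpl in *; try contradiction.
  - subst; destruct (aeq_var_free G x y H Hn) as [-> ?]; auto.
  - destruct Hz as [Hz Hzx].
    destruct (IH ((x, y) :: G) b' H Hz) as [Hz' Hn']; simpl in *;
      [intros [->|?]; tauto|].
    repeat split; [exact Hz' | intros ->; tauto | tauto].
  - destruct H as [H1 H2], Hz as [Hz|Hz].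
    + destruct (IHa G a' H1 Hz Hn); auto.
    + destruct (IHb G b' H2 Hz Hn); auto.
Qed.

Lemma aeq_env_fv (G : list (var * var)) (t t' : term) (E E' : env) (z : var) :
  aeq_env G t E t' E' -> fv_env z t E -> ~ In z (map fst G) ->
  fv_env z t' E' /\ ~ In z (map snd G).
Proof.
  revert G t' E'; induction E as [|E IH x u]; intros G t' [|E' y u'] H Hz Hn;
    simpl in *; try contradiction.
  - eapply aeq_fv; eauto.
  - destruct H as [Hu HE], Hz as [[Hz Hzx]|Hz].
    + destruct (IH ((x, y) :: G) t' E' HE Hz) as [Hz' Hn']; simpl in *;
        [intros [->|?]; tauto|].
      split; [left; split; [exact Hz' | intros ->; tauto] | tauto].
    + destruct (aeq_fv G u u' z Hu Hz Hn); auto.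
Qed.

Lemma aeq_prog_fv (p q : prog) (z : var) : aeq_prog p q -> fv_prog z p -> fv_prog z q.
Proof. intros H Hz; apply (aeq_env_fv [] _ _ _ _ z H Hz); simpl; tauto. Qed.

Lemma aeq_closed_fv (a b : term) (z : var) : aeq [] a b -> fv_t z b -> fv_t z a.
Proof.
  intros H Hz; apply aeq_sym in H; simpl in H.
  apply (aeq_fv [] b a z H Hz); simpl; tauto.
Qed.

Lemma aeq_length_bv (G : list (var * var)) (t t' : term) :
  aeq G t t' -> length (bv_t t) = length (bv_t t').
Proof.
  revert G t'; induction t as [x|x b IH|a IHa b IHb]; intros G [y|y b'|a' b'] H;
    simpl in *; try contradiction; auto.
  - f_equal; eauto.
  - destruct H; rewrite !length_app; f_equal; eauto.
Qed.

Lemma aeq_env_length_bv (G : list (var * var)) (t t' : term) (E E' : env) :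
  aeq_env G t E t' E' ->
  length (bv_t t) = length (bv_t t') /\ length (bv_env E) = length (bv_env E').
Proof.
  revert G t' E'; induction E as [|E IH x u]; intros G t' [|E' y u'] H;
    simpl in *; try contradiction.
  - split; [eapply aeq_length_bv; eauto | reflexivity].
  - destruct H as [Hu HE]; destruct (IH _ _ _ HE) as [Ht HE'].
    split; [exact Ht|]; rewrite !length_app; erewrite aeq_length_bv, HE'; eauto.
Qed.

(** * Free variables *)

Lemma fv_plug_t (C : tctx) (a : term) (z : var) : fv_t z a -> fv_t z (plug_t C a).
Proof. induction C; simpl; auto. Qed.

Lemma fv_plug_t_inv (C : tctx) (a b : term) (z : var) :
  fv_t z (plug_t C a) -> fv_t z (plug_t C b) \/ fv_t z a.
Proof.
  induction C as [|C IH u|u C IH]; simpl; auto; intros [Hz|Hz]; auto;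
    destruct (IH Hz); auto.
Qed.

Lemma nv_t_fv (z : var) (t : term) : nv_t z t -> fv_t z t.
Proof. induction t; simpl; tauto. Qed.

Lemma nv_ctx_fv (z : var) (C : tctx) (s : term) : nv_ctx z C -> fv_t z (plug_t C s).
Proof.
  induction C; simpl; [tauto | auto |].
  intros [Hz|Hz]; [left; apply nv_t_fv | right]; auto.
Qed.

Lemma evctx_needed_fv (V : var -> Prop) (P : pctx) (s : term) (z : var) :
  evctx V P -> V z -> fv_prog z (plug_term P s).
Proof.
  intro HP; revert s z; unfold fv_prog.
  induction HP as [H HH|V P x i HP IH Hx Hi|V P x t HP IH Hx|V P x H HP IH Hx Hd HH];
    intros s z Hz.
  - apply nv_ctx_fv; exact Hz.
  - rewrite plug_term_pctx_app; simpl.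
    destruct Hz as [[Hz Hzx]|Hz]; [left; auto | right; apply nv_t_fv; exact Hz].
  - rewrite plug_term_pctx_app; simpl.
    left; split; [auto | intros ->; contradiction].
  - rewrite plug_term_prog_app_ctx; simpl.
    destruct Hz as [Hz|Hz]; [left; split | right; apply nv_ctx_fv]; auto.
    intros ->; contradiction.
Qed.

Lemma fv_env_mono (Q : var -> Prop) (a b : term) (E : env) (z : var) :
  (forall w, fv_t w a -> fv_t w b \/ Q w) -> fv_env z a E -> fv_env z b E \/ Q z.
Proof.
  intro Hab; revert z; induction E as [|E IH y u]; simpl; intros z Hz; auto.
  destruct Hz as [[Hz Hzy]|Hz]; auto.
  destruct (IH z Hz); auto.
Qed.

Lemma fv_env_cat_mono (a b : term) (E1 E2 E : env) (z : var) :
  (forall w, fv_env w a E1 -> fv_env w b E2) ->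
  fv_env z a (env_cat E1 E) -> fv_env z b (env_cat E2 E).
Proof.
  intro H12; revert z; induction E as [|E IH y u]; simpl; intros z Hz; auto.
  destruct Hz as [[Hz Hzy]|Hz]; auto.
Qed.

Lemma fv_plug_g_mono (Q : var -> Prop) (u : term) (G : gctx) (a b : term) (z : var) :
  (forall w, fv_t w a -> fv_t w b \/ Q w) ->
  fv_prog z (plug_g u G (a, Eps)) -> fv_prog z (plug_g u G (b, Eps)) \/ Q z.
Proof.
  intro Hab; unfold fv_prog; revert z; induction G as [E y C|G IH y w]; simpl; intros z.
  - intros [[Hz Hzy]|Hz]; auto.
    destruct (fv_plug_t_inv C a b z Hz) as [Hz'|Hz']; auto.
    destruct (Hab z Hz'); [left; right; apply fv_plug_t | right]; auto.
  - intros [[Hz Hzy]|Hz]; auto.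
    destruct (IH z Hz); auto.
Qed.

Lemma fv_beta_contractum (C : tctx) (x : var) (t u : term) (z : var) :
  fv_env z (plug_t C t) (ESnoc Eps x u) -> fv_t z (plug_t C (App (Lam x t) u)).
Proof.
  simpl; intros [[Hz Hzx]|Hz].
  - destruct (fv_plug_t_inv C t (App (Lam x t) u) z Hz); auto.
    apply fv_plug_t; simpl; auto.
  - apply fv_plug_t; simpl; auto.
Qed.

Lemma fv_plug_beta (P : pctx) (x : var) (t u : term) (z : var) :
  fv_prog z (plug P (t, ESnoc Eps x u)) -> fv_prog z (plug_term P (App (Lam x t) u)).
Proof.
  unfold fv_prog; destruct P as [C E|u0 G]; simpl.
  - apply fv_env_cat_mono; intro w; apply fv_beta_contractum.
  - revert z; induction G as [E y C|G IH w s]; simpl; intros z.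
    + intros [[[[Hz Hzx]|Hz] Hzy]|Hz]; auto;
        right; apply fv_beta_contractum; simpl; auto.
    + intros [[Hz Hzw]|Hz]; auto.
Qed.

Lemma fv_plug_term_lookup_env (C : tctx) (E : env) (x : var) (v s : term) (z : var) :
  In (x, v) (es_env E) -> (forall w, fv_t w s -> fv_t w v) ->
  fv_env z (plug_t C s) E -> fv_env z (plug_t C (Var x)) E.
Proof.
  revert z; induction E as [|E IH y u]; simpl; intros z Hxv Hs Hz; [contradiction|].
  destruct Hxv as [Hxv|Hxv], Hz as [[Hz Hzy]|Hz]; auto.
  injection Hxv as -> ->.
  destruct (fv_env_mono (fun w => fv_t w v) (plug_t C s) (plug_t C (Var x)) E z); auto.
  intros w Hw; destruct (fv_plug_t_inv C s (Var x) w Hw); auto.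
Qed.

Lemma es_g_dom (G : gctx) (x : var) (v : term) : In (x, v) (es_g G) -> In x (dom_g G).
Proof.
  induction G as [E y C|G IH y w]; simpl.
  - right; eapply es_env_dom; eauto.
  - intros [Hxv|Hxv]; [injection Hxv as -> _; left | right]; auto.
Qed.

Lemma fv_plug_term_lookup_g (u : term) (G : gctx) (x : var) (v s : term) (z : var) :
  NoDup (dom_g G) -> In (x, v) (es_g G) ->
  ~ fv_prog x (plug_g u G (Var x, Eps)) -> (forall w, fv_t w s -> fv_t w v) ->
  fv_prog z (plug_g u G (s, Eps)) -> fv_prog z (plug_g u G (Var x, Eps)).
Proof.
  revert z; induction G as [E y C|G IH y w]; intros z ND Hxv Hx Hs Hz.
  - exfalso; apply Hx; right; apply fv_plug_t; simpl; auto.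
  - simpl in *; inversion ND as [|? ? Hy ND']; subst.
    unfold fv_prog in *; simpl in *.
    destruct Hxv as [Hxv|Hxv], Hz as [[Hz Hzy]|Hz]; auto.
    + injection Hxv as -> ->.
      destruct (fv_plug_g_mono (fun w => fv_t w v) u G s (Var x) z); auto.
    + assert (x <> y) by (intros ->; apply Hy; eapply es_g_dom; eauto).
      left; split; [eapply IH|]; eauto.
Qed.

Lemma fv_ond_raw (p q : prog) (z : var) :
  well_named p -> ond_raw p q -> fv_prog z q -> fv_prog z p.
Proof.
  intros Hwn Hpq; destruct Hpq as [V P x t u HP|V P x v v' HP Hl Hv Ha]; intro Hz.
  - apply fv_plug_beta; exact Hz.
  - assert (Hv' : forall w, fv_t w v' -> fv_t w v) by (intro; apply aeq_closed_fv, Ha).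
    destruct P as [C E|u G].
    + unfold fv_prog, plug_term, plug in *; simpl in *; rewrite env_cat_Eps_l in *.
      eapply fv_plug_term_lookup_env; eauto.
    + apply (fv_plug_term_lookup_g u G x v v'); auto.
      * change (dom_g G) with (dom_pctx (PEnv u G)); rewrite <- (dom_plug_term _ (Var x)).
        apply NoDup_dom_env, well_named_NoDup_env, Hwn.
      * apply (well_named_bound_not_free _ _ Hwn), (es_env_dom _ _ v), lookup_plug_term, Hl.
Qed.

(** * Uniqueness of the redex position *)

Inductive redex_shape : term -> Prop :=
| redex_shape_var x : redex_shape (Var x)
| redex_shape_beta x t u : redex_shape (App (Lam x t) u).

(* The side condition under which a variable in redex position fires. *)
Definition binds_values (E : env) (s : term) : Prop :=
  forall x v, s = Var x -> In (x, v) (es_env E) -> is_value v.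

Lemma binds_values_snoc (E : env) (y : var) (u s : term) :
  binds_values (ESnoc E y u) s -> binds_values E s.
Proof. intros Hs x v Hx Hxv; apply (Hs x v Hx); right; exact Hxv. Qed.

Lemma binds_values_head (E : env) (y : var) (u : term) :
  binds_values (ESnoc E y u) (Var y) -> is_value u.
Proof. intro Hs; apply (Hs y u eq_refl); left; reflexivity. Qed.

Lemma binds_values_unbound (E : env) (y : var) :
  ~ In y (dom_env E) -> binds_values E (Var y).
Proof. intros Hy x v Hx Hxv; injection Hx as <-; exfalso; eapply Hy, es_env_dom, Hxv. Qed.

Lemma redex_shape_plug_not_value (C : tctx) (s : term) :
  redex_shape s -> ~ is_value (plug_t C s).
Proof. destruct C, 1; simpl; auto. Qed.

Lemma inert_not_value (i : term) : inert i -> ~ is_value i.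
Proof. destruct 1; simpl; auto. Qed.

Lemma inert_plug_needed (H : tctx) (s : term) :
  is_H H -> redex_shape s -> inert (plug_t H s) ->
  exists x, s = Var x /\ nv_t x (plug_t H s).
Proof.
  intros HH Hs; induction HH as [|H t HH IH|i H Hi HH IH]; simpl; intro Hin.
  - destruct Hs as [x|x t u]; [exists x; simpl; auto|].
    inversion Hin as [|i f Hi]; inversion Hi.
  - inversion Hin as [|? ? Hi]; subst.
    destruct (IH Hi) as [x [-> Hx]]; exists x; simpl; auto.
  - inversion Hin as [|? ? ? Hf]; subst.
    inversion Hf as [? Hv|? Hi']; subst.
    + exfalso; eapply redex_shape_plug_not_value; eauto.
    + destruct (IH Hi') as [x [-> Hx]]; exists x; simpl; auto.
Qed.

Lemma is_H_plug_unique (H1 H2 : tctx) (s1 s2 : term) :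
  is_H H1 -> is_H H2 -> plug_t H1 s1 = plug_t H2 s2 ->
  redex_shape s1 -> redex_shape s2 ->
  (H1 = H2 /\ s1 = s2) \/ (exists x, s1 = Var x /\ nv_ctx x H2) \/
  (exists x, s2 = Var x /\ nv_ctx x H1).
Proof.
  intros HH1; revert H2 s2.
  induction HH1 as [|H1 t HH1 IH|i H1 Hi HH1 IH];
    intros H2 s2 HH2 Heq Hs1 Hs2; destruct HH2 as [|H2 t2 HH2|i2 H2 Hi2 HH2];
    simpl in Heq.
  - subst; auto.
  - exfalso; destruct Hs1 as [|x b u]; [discriminate|].
    injection Heq as Hb _; eapply redex_shape_plug_not_value; [exact Hs2|].
    rewrite <- Hb; simpl; auto.
  - exfalso; destruct Hs1 as [|x b u]; [discriminate|].
    injection Heq as Hb _; rewrite <- Hb in Hi2; inversion Hi2.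
  - exfalso; destruct Hs2 as [|x b u]; [discriminate|].
    injection Heq as Hb _; eapply redex_shape_plug_not_value; [exact Hs1|].
    rewrite Hb; simpl; auto.
  - injection Heq as Heq ->.
    destruct (IH H2 s2 HH2 Heq Hs1 Hs2) as [[-> ->]|[[x [-> Hx]]|[x [-> Hx]]]];
      [left | right; left | right; right]; try exists x; simpl; auto.
  - injection Heq as <- ->.
    destruct (inert_plug_needed H1 s1 HH1 Hs1 Hi2) as [x [-> Hx]].
    right; left; exists x; simpl; auto.
  - exfalso; destruct Hs2 as [|x b u]; [discriminate|].
    injection Heq as Hb _; rewrite Hb in Hi; inversion Hi.
  - injection Heq as -> <-.
    destruct (inert_plug_needed H2 s2 HH2 Hs2 Hi) as [x [-> Hx]].
    right; right; exists x; simpl; auto.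
  - injection Heq as -> Heq.
    destruct (IH H2 s2 HH2 Heq Hs1 Hs2) as [[-> ->]|[[x [-> Hx]]|[x [-> Hx]]]];
      [left | right; left | right; right]; try exists x; simpl; auto.
Qed.

(* The two ways the outermost substitution [y <- u] of [P<s>] can arise:
   appended to a smaller evaluation context, or containing the hole. *)
Inductive snoc_split (V : var -> Prop) (P : pctx) (s t : term) (E : env) (y : var) (u : term) :
  Prop :=
| snoc_split_outer V' P' :
    evctx V' P' -> P = pctx_app P' y u -> plug_term P' s = (t, E) ->
    (forall z, V' z -> z <> y -> V z) ->
    (V' y -> inert u /\ forall z, nv_t z u -> V z) ->
    snoc_split V P s t E y u
| snoc_split_hole W P' H :
    evctx W P' -> ~ W y -> ~ In y (dom_pctx P') -> is_H H ->
    P = prog_app_ctx (t, E) y H -> plug_term P' (Var y) = (t, E) -> u = plug_t H s ->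
    (forall z, W z \/ nv_ctx z H -> V z) ->
    snoc_split V P s t E y u.

Lemma evctx_plug_snoc (V : var -> Prop) (P : pctx) (s t : term) (E : env) (y : var) (u : term) :
  evctx V P -> plug_term P s = (t, ESnoc E y u) -> snoc_split V P s t E y u.
Proof.
  destruct 1 as [H HH|V P x i HP Hx Hi|V P x t' HP Hx|V P x H HP Hx Hd HH]; intro Heq.
  - discriminate.
  - rewrite plug_term_pctx_app in Heq; injection Heq as Ht HE -> ->.
    apply (snoc_split_outer _ _ _ _ _ _ _ V P); auto.
    rewrite (surjective_pairing (plug_term P s)), Ht, HE; reflexivity.
  - rewrite plug_term_pctx_app in Heq; injection Heq as Ht HE -> ->.
    apply (snoc_split_outer _ _ _ _ _ _ _ V P); auto; [|contradiction].
    rewrite (surjective_pairing (plug_term P s)), Ht, HE; reflexivity.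
  - rewrite plug_term_prog_app_ctx in Heq; injection Heq as Ht HE -> <-.
    assert (Hp : plug_term P (Var y) = (t, E))
      by (rewrite (surjective_pairing (plug_term P (Var y))), Ht, HE; reflexivity).
    apply (snoc_split_hole _ _ _ _ _ _ _ V P H); auto.
    rewrite Hp; reflexivity.
Qed.

Definition unique_decomposition (E : env) : Prop :=
  forall t V1 P1 s1 V2 P2 s2,
    evctx V1 P1 -> evctx V2 P2 ->
    plug_term P1 s1 = (t, E) -> plug_term P2 s2 = (t, E) ->
    redex_shape s1 -> redex_shape s2 -> binds_values E s1 -> binds_values E s2 ->
    (P1 = P2 /\ s1 = s2) \/
    (exists x, s1 = Var x /\ V2 x) \/ (exists x, s2 = Var x /\ V1 x).

Lemma unique_decomposition_Eps : unique_decomposition Eps.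
Proof.
  intros t V1 P1 s1 V2 P2 s2 HP1 HP2 E1 E2 Hs1 Hs2 _ _.
  destruct HP1 as [H1 HH1| | |]; [|try rewrite plug_term_pctx_app in E1; discriminate ..].
  destruct HP2 as [H2 HH2| | |]; [|try rewrite plug_term_pctx_app in E2; discriminate ..].
  injection E1 as E1; injection E2 as E2; rewrite <- E2 in E1.
  destruct (is_H_plug_unique H1 H2 s1 s2 HH1 HH2 E1 Hs1 Hs2)
    as [[-> ->]|[[x [-> Hx]]|[x [-> Hx]]]];
    [left | right; left | right; right]; try exists x; auto.
Qed.

Lemma unique_decomposition_outer_outer (E : env) (t : term) (y : var) (u : term)
    (V1 V1' V2 V2' : var -> Prop) (P1' P2' : pctx) (s1 s2 : term) :
  unique_decomposition E ->
  evctx V1' P1' -> plug_term P1' s1 = (t, E) ->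
  (forall z, V1' z -> z <> y -> V1 z) -> (V1' y -> inert u) ->
  evctx V2' P2' -> plug_term P2' s2 = (t, E) ->
  (forall z, V2' z -> z <> y -> V2 z) -> (V2' y -> inert u) ->
  redex_shape s1 -> redex_shape s2 ->
  binds_values (ESnoc E y u) s1 -> binds_values (ESnoc E y u) s2 ->
  (pctx_app P1' y u = pctx_app P2' y u /\ s1 = s2) \/
  (exists x, s1 = Var x /\ V2 x) \/ (exists x, s2 = Var x /\ V1 x).
Proof.
  intros IH HP1 E1 HV1 Hy1 HP2 E2 HV2 Hy2 Hs1 Hs2 Hb1 Hb2.
  destruct (IH t V1' P1' s1 V2' P2' s2 HP1 HP2 E1 E2 Hs1 Hs2
              (binds_values_snoc _ _ _ _ Hb1) (binds_values_snoc _ _ _ _ Hb2))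
    as [[-> ->]|[[x [-> Hx]]|[x [-> Hx]]]]; [left; auto | right; left | right; right];
    exists x; split; auto.
  (* [x = y] would make [u] both inert and, by [binds_values], a value. *)
  - apply HV2; [exact Hx|]; intros ->.
    eapply inert_not_value; [apply Hy2, Hx | eapply binds_values_head, Hb1].
  - apply HV1; [exact Hx|]; intros ->.
    eapply inert_not_value; [apply Hy1, Hx | eapply binds_values_head, Hb2].
Qed.

Lemma unique_decomposition_outer_hole (E : env) (t : term) (y : var) (u : term)
    (V1 V1' V2 W : var -> Prop) (P1' P2' : pctx) (H : tctx) (s1 s2 : term) :
  unique_decomposition E ->
  evctx V1' P1' -> plug_term P1' s1 = (t, E) ->
  (V1' y -> inert u /\ forall z, nv_t z u -> V1 z) ->
  evctx W P2' -> ~ W y -> ~ In y (dom_pctx P2') -> is_H H ->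
  plug_term P2' (Var y) = (t, E) -> u = plug_t H s2 ->
  (forall z, W z \/ nv_ctx z H -> V2 z) ->
  redex_shape s1 -> redex_shape s2 -> binds_values (ESnoc E y u) s1 ->
  (exists x, s1 = Var x /\ V2 x) \/ (exists x, s2 = Var x /\ V1 x).
Proof.
  intros IH HP1 E1 Hy1 HW Hy Hd HH E2 Hu HV2 Hs1 Hs2 Hb1.
  assert (Hb2 : binds_values E (Var y)).
  { apply binds_values_unbound.
    replace E with (snd (plug_term P2' (Var y))) by (rewrite E2; reflexivity).
    rewrite dom_plug_term; exact Hd. }
  destruct (IH t V1' P1' s1 W P2' (Var y) HP1 HW E1 E2 Hs1 (redex_shape_var y)
              (binds_values_snoc _ _ _ _ Hb1) Hb2)
    as [[_ ->]|[[x [-> Hx]]|[x [Hx Hx1]]]].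
  - exfalso; apply (redex_shape_plug_not_value H s2 Hs2).
    rewrite <- Hu; eapply binds_values_head, Hb1.
  - left; exists x; auto.
  - injection Hx as <-; destruct (Hy1 Hx1) as [Hi Hnv]; subst u.
    destruct (inert_plug_needed H s2 HH Hs2 Hi) as [x [-> Hx]].
    right; exists x; auto.
Qed.

Lemma unique_decomposition_hole_hole (t : term) (E : env) (y : var) (u : term)
    (V1 V2 : var -> Prop) (H1 H2 : tctx) (s1 s2 : term) :
  is_H H1 -> u = plug_t H1 s1 -> (forall z, nv_ctx z H1 -> V1 z) ->
  is_H H2 -> u = plug_t H2 s2 -> (forall z, nv_ctx z H2 -> V2 z) ->
  redex_shape s1 -> redex_shape s2 ->
  (prog_app_ctx (t, E) y H1 = prog_app_ctx (t, E) y H2 /\ s1 = s2) \/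
  (exists x, s1 = Var x /\ V2 x) \/ (exists x, s2 = Var x /\ V1 x).
Proof.
  intros HH1 Hu1 HV1 HH2 Hu2 HV2 Hs1 Hs2; rewrite Hu1 in Hu2.
  destruct (is_H_plug_unique H1 H2 s1 s2 HH1 HH2 Hu2 Hs1 Hs2)
    as [[-> ->]|[[x [-> Hx]]|[x [-> Hx]]]];
    [left | right; left | right; right]; try exists x; auto.
Qed.

Lemma unique_decomposition_all (E : env) : unique_decomposition E.
Proof.
  induction E as [|E IH y u]; [exact unique_decomposition_Eps|].
  intros t V1 P1 s1 V2 P2 s2 HP1 HP2 E1 E2 Hs1 Hs2 Hb1 Hb2.
  destruct (evctx_plug_snoc _ _ _ _ _ _ _ HP1 E1)
    as [V1' P1' HP1' -> E1' HV1 Hy1|W1 P1' H1 HW1 Hy1 Hd1 HH1 -> E1' Hu1 HV1];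
  destruct (evctx_plug_snoc _ _ _ _ _ _ _ HP2 E2)
    as [V2' P2' HP2' -> E2' HV2 Hy2|W2 P2' H2 HW2 Hy2 Hd2 HH2 -> E2' Hu2 HV2].
  - apply (unique_decomposition_outer_outer E t y u V1 V1' V2 V2' P1' P2'); auto;
      [intro Hy; apply (proj1 (Hy1 Hy)) | intro Hy; apply (proj1 (Hy2 Hy))].
  - right; apply (unique_decomposition_outer_hole E t y u V1 V1' V2 W2 P1' P2' H2); auto.
  - right; cut ((exists x, s2 = Var x /\ V1 x) \/ (exists x, s1 = Var x /\ V2 x)).
    + tauto.
    + apply (unique_decomposition_outer_hole E t y u V2 V2' V1 W1 P2' P1' H1); auto.
  - apply (unique_decomposition_hole_hole t E y u V1 V2 H1 H2); auto.
Qed.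

(** * Determinism on well-named representatives *)

Inductive contracts (P : pctx) : term -> prog -> Prop :=
| contracts_beta x t u : contracts P (App (Lam x t) u) (plug P (t, ESnoc Eps x u))
| contracts_var x v v' :
    lookup P x v -> is_value v -> aeq [] v v' -> contracts P (Var x) (plug_term P v').

Lemma ond_raw_contracts (p q : prog) :
  ond_raw p q -> exists V P s, evctx V P /\ plug_term P s = p /\ contracts P s q.
Proof.
  destruct 1 as [V P x t u HP|V P x v v' HP Hl Hv Ha];
    exists V, P; eexists; repeat split; eauto using contracts.
Qed.

Lemma contracts_redex_shape (P : pctx) (s : term) (q : prog) :
  contracts P s q -> redex_shape s.
Proof. destruct 1; constructor. Qed.

Lemma contracts_binds_values (p : prog) (P : pctx) (s : term) (q : prog) :
  well_named p -> plug_term P s = p -> contracts P s q -> binds_values (snd p) s.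
Proof.
  intros Hwn Hp Hc x w Hx Hxw; destruct Hc as [|y v v' Hl Hv Ha]; [discriminate|].
  injection Hx as ->.
  replace w with v; [exact Hv|].
  apply (es_env_functional (snd p) x); [apply well_named_NoDup_env, Hwn | | exact Hxw].
  rewrite <- Hp; apply lookup_plug_term, Hl.
Qed.

Lemma needed_not_bound (p : prog) (V : var -> Prop) (P P' : pctx) (s s' : term)
    (x : var) (v : term) :
  well_named p -> evctx V P -> plug_term P s = p -> V x ->
  plug_term P' s' = p -> lookup P' x v -> False.
Proof.
  intros Hwn HP Hp Hx Hp' Hl.
  apply (well_named_bound_not_free p x Hwn).
  - rewrite <- Hp'; eapply es_env_dom, lookup_plug_term, Hl.
  - rewrite <- Hp; eapply evctx_needed_fv; eauto.
Qed.

Lemma contracts_position_unique (p : prog) (V1 V2 : var -> Prop) (P1 P2 : pctx)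
    (s1 s2 : term) (q1 q2 : prog) :
  well_named p -> evctx V1 P1 -> evctx V2 P2 ->
  plug_term P1 s1 = p -> plug_term P2 s2 = p ->
  contracts P1 s1 q1 -> contracts P2 s2 q2 -> P1 = P2 /\ s1 = s2.
Proof.
  intros Hwn HP1 HP2 Hp1 Hp2 Hc1 Hc2.
  assert (Hpt1 : plug_term P1 s1 = (fst p, snd p)) by (rewrite Hp1; apply surjective_pairing).
  assert (Hpt2 : plug_term P2 s2 = (fst p, snd p)) by (rewrite Hp2; apply surjective_pairing).
  destruct (unique_decomposition_all (snd p) (fst p) V1 P1 s1 V2 P2 s2 HP1 HP2 Hpt1 Hpt2
              (contracts_redex_shape _ _ _ Hc1) (contracts_redex_shape _ _ _ Hc2)
              (contracts_binds_values p P1 s1 q1 Hwn Hp1 Hc1)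
              (contracts_binds_values p P2 s2 q2 Hwn Hp2 Hc2))
    as [Hsame|[[x [-> Hx]]|[x [-> Hx]]]]; [exact Hsame | exfalso ..].
  - inversion Hc1 as [|? v ? Hl]; apply (needed_not_bound p V2 P2 P1 s2 (Var x) x v); auto.
  - inversion Hc2 as [|? v ? Hl]; apply (needed_not_bound p V1 P1 P2 s1 (Var x) x v); auto.
Qed.

Lemma contracts_det (P : pctx) (s : term) (q1 q2 : prog) :
  well_named (plug_term P s) -> contracts P s q1 -> contracts P s q2 -> aeq_prog q1 q2.
Proof.
  intros Hwn Hc1 Hc2; destruct Hc1 as [x t u|x v1 v1' Hl1 Hv1 Ha1].
  - inversion Hc2; subst; apply aeq_prog_refl.
  - inversion Hc2 as [|? v2 v2' Hl2 Hv2 Ha2]; subst.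
    assert (Hv : v1 = v2).
    { apply (es_env_functional (snd (plug_term P (Var x))) x);
        [apply well_named_NoDup_env, Hwn | apply lookup_plug_term ..]; assumption. }
    subst v2; apply aeq_plug_term.
    apply aeq_sym in Ha1; simpl in Ha1.
    eapply aeq_trans; [constructor | exact Ha1 | exact Ha2].
Qed.

Lemma ond_raw_det (p q1 q2 : prog) :
  well_named p -> ond_raw p q1 -> ond_raw p q2 -> aeq_prog q1 q2.
Proof.
  intros Hwn H1 H2.
  destruct (ond_raw_contracts p q1 H1) as [V1 [P1 [s1 [HP1 [Hp1 Hc1]]]]].
  destruct (ond_raw_contracts p q2 H2) as [V2 [P2 [s2 [HP2 [Hp2 Hc2]]]]].
  destruct (contracts_position_unique p V1 V2 P1 P2 s1 s2 q1 q2) as [<- <-]; auto.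
  subst p; eapply contracts_det; eauto.
Qed.

(** * Renaming variables *)

Fixpoint rename_t (f : var -> var) (t : term) : term :=
  match t with
  | Var x => Var (f x)
  | Lam x b => Lam (f x) (rename_t f b)
  | App a b => App (rename_t f a) (rename_t f b)
  end.

Fixpoint rename_env (f : var -> var) (E : env) : env :=
  match E with
  | Eps => Eps
  | ESnoc E x u => ESnoc (rename_env f E) (f x) (rename_t f u)
  end.

Fixpoint rename_tctx (f : var -> var) (C : tctx) : tctx :=
  match C with
  | Hole => Hole
  | CAppL C u => CAppL (rename_tctx f C) (rename_t f u)
  | CAppR u C => CAppR (rename_t f u) (rename_tctx f C)
  end.

Fixpoint rename_gctx (f : var -> var) (G : gctx) : gctx :=
  match G with
  | GHere E x C => GHere (rename_env f E) (f x) (rename_tctx f C)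
  | GSnoc G x u => GSnoc (rename_gctx f G) (f x) (rename_t f u)
  end.

Definition rename_pctx (f : var -> var) (P : pctx) : pctx :=
  match P with
  | PTerm C E => PTerm (rename_tctx f C) (rename_env f E)
  | PEnv t G => PEnv (rename_t f t) (rename_gctx f G)
  end.

Definition rename_prog (f : var -> var) (p : prog) : prog :=
  (rename_t f (fst p), rename_env f (snd p)).

Section Renaming.

Variable f : var -> var.

Lemma rename_plug_t (C : tctx) (t : term) :
  rename_t f (plug_t C t) = plug_t (rename_tctx f C) (rename_t f t).
Proof. induction C; simpl; congruence. Qed.

Lemma rename_env_cat (E1 E2 : env) :
  rename_env f (env_cat E1 E2) = env_cat (rename_env f E1) (rename_env f E2).
Proof. induction E2; simpl; congruence. Qed.

Lemma rename_plug (P : pctx) (p : prog) :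
  rename_prog f (plug P p) = plug (rename_pctx f P) (rename_prog f p).
Proof.
  unfold rename_prog; destruct P as [C E|u G]; simpl.
  - rewrite rename_plug_t, rename_env_cat; reflexivity.
  - induction G as [E x C|G IH x s]; simpl.
    + rewrite rename_env_cat; simpl; rewrite rename_plug_t; reflexivity.
    + unfold prog_app; rewrite <- IH; reflexivity.
Qed.

Lemma rename_plug_term (P : pctx) (t : term) :
  rename_prog f (plug_term P t) = plug_term (rename_pctx f P) (rename_t f t).
Proof. apply rename_plug. Qed.

Lemma rename_pctx_app (P : pctx) (x : var) (u : term) :
  rename_pctx f (pctx_app P x u) = pctx_app (rename_pctx f P) (f x) (rename_t f u).
Proof. destruct P; reflexivity. Qed.

Lemma rename_prog_app_ctx (p : prog) (x : var) (H : tctx) :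
  rename_pctx f (prog_app_ctx p x H) = prog_app_ctx (rename_prog f p) (f x) (rename_tctx f H).
Proof. reflexivity. Qed.

Definition rename_pair (b : var * term) : var * term := let (x, t) := b in (f x, rename_t f t).

Lemma es_rename_pctx (P : pctx) :
  es_pctx (rename_pctx f P) = map rename_pair (es_pctx P).
Proof.
  assert (Henv : forall E, es_env (rename_env f E) = map rename_pair (es_env E))
    by (induction E; simpl; congruence).
  destruct P as [C E|u G]; simpl; [apply Henv|].
  induction G; simpl; congruence.
Qed.

Lemma dom_rename_pctx (P : pctx) : dom_pctx (rename_pctx f P) = map f (dom_pctx P).
Proof.
  assert (Henv : forall E, dom_env (rename_env f E) = map f (dom_env E))
    by (induction E; simpl; congruence).
  destruct P as [C E|u G]; simpl; [apply Henv|].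
  induction G; simpl; congruence.
Qed.

Lemma rename_value (t : term) : is_value t -> is_value (rename_t f t).
Proof. destruct t; simpl; auto. Qed.

Lemma rename_inert_fireball (t : term) :
  (inert t -> inert (rename_t f t)) /\ (fireball t -> fireball (rename_t f t)).
Proof.
  induction t as [x|x b IH|a IHa b IHb]; simpl; split; intro H.
  - constructor.
  - apply fb_inert; constructor.
  - inversion H.
  - apply fb_value; simpl; auto.
  - inversion H; subst; constructor; [apply IHa | apply IHb]; assumption.
  - inversion H as [v Hv|i Hi]; subst; [contradiction|].
    inversion Hi; subst; apply fb_inert; constructor; [apply IHa | apply IHb]; assumption.
Qed.

Lemma rename_inert (t : term) : inert t -> inert (rename_t f t).
Proof. apply rename_inert_fireball. Qed.

Lemma rename_is_H (H : tctx) : is_H H -> is_H (rename_tctx f H).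
Proof. induction 1; simpl; constructor; auto using rename_inert. Qed.

Fixpoint rename_ctx (G : list (var * var)) : list (var * var) :=
  match G with
  | [] => []
  | (a, b) :: G => (f a, f b) :: rename_ctx G
  end.

Hypothesis f_inj : forall x y, f x = f y -> x = y.

Lemma rename_nv_t (z : var) (t : term) : nv_t (f z) (rename_t f t) <-> nv_t z t.
Proof.
  induction t; simpl; try tauto.
  split; [apply f_inj | intros ->; reflexivity].
Qed.

Lemma rename_nv_ctx (z : var) (C : tctx) : nv_ctx (f z) (rename_tctx f C) <-> nv_ctx z C.
Proof. induction C; simpl; rewrite ?rename_nv_t; tauto. Qed.

Lemma rename_not_in_dom (P : pctx) (x : var) :
  ~ In x (dom_pctx P) -> ~ In (f x) (dom_pctx (rename_pctx f P)).
Proof.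
  intros Hx; rewrite dom_rename_pctx, in_map_iff.
  intros [y [Hy Hin]]; apply f_inj in Hy; subst; contradiction.
Qed.

Lemma rename_evctx (V : var -> Prop) (P : pctx) :
  evctx V P -> exists W, evctx W (rename_pctx f P) /\ forall z, W (f z) <-> V z.
Proof.
  induction 1 as [H HH|V P x i HP IH Hx Hi|V P x t HP IH Hx|V P x H HP IH Hx Hd HH].
  - exists (fun z => nv_ctx z (rename_tctx f H)); split.
    + apply ev_base, rename_is_H, HH.
    + intro z; apply rename_nv_ctx.
  - destruct IH as [W [HW HWV]].
    exists (fun z => (W z /\ z <> f x) \/ nv_t z (rename_t f i)); split.
    + rewrite rename_pctx_app.
      apply ev_inert; [exact HW | apply HWV, Hx | apply rename_inert, Hi].
    + intro z; rewrite HWV, rename_nv_t.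
      assert (f z <> f x <-> z <> x)
        by (split; [congruence | intros Hzx Hf; apply Hzx, f_inj, Hf]).
      tauto.
  - destruct IH as [W [HW HWV]].
    exists W; split; [|exact HWV].
    rewrite rename_pctx_app; apply ev_garbage; [exact HW | rewrite HWV; exact Hx].
  - destruct IH as [W [HW HWV]].
    exists (fun z => W z \/ nv_ctx z (rename_tctx f H)); split.
    + rewrite rename_prog_app_ctx, rename_plug_term.
      apply ev_hole; [exact HW | rewrite HWV; exact Hx | apply rename_not_in_dom, Hd |
                      apply rename_is_H, HH].
    + intro z; rewrite HWV, rename_nv_ctx; tauto.
Qed.

Lemma rename_aeq_var (G : list (var * var)) (x y : var) :
  aeq_var G x y -> aeq_var (rename_ctx G) (f x) (f y).
Proof.
  revert x y; induction G as [|[a b] G IH]; simpl; intros x y H; [congruence|].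
  destruct H as [[-> ->]|[Ha [Hb H]]]; [left; auto|].
  right; repeat split; auto; intro Hf; apply f_inj in Hf; contradiction.
Qed.

Lemma rename_aeq (G : list (var * var)) (t t' : term) :
  aeq G t t' -> aeq (rename_ctx G) (rename_t f t) (rename_t f t').
Proof.
  revert G t'; induction t as [x|x b IH|a IHa b IHb]; intros G [y|y b'|a' b'] H;
    simpl in *; try contradiction.
  - apply rename_aeq_var, H.
  - apply (IH ((x, y) :: G)), H.
  - destruct H; split; auto.
Qed.

Lemma rename_ond_raw (p q : prog) : ond_raw p q -> ond_raw (rename_prog f p) (rename_prog f q).
Proof.
  destruct 1 as [V P x t u HP|V P x v v' HP Hl Hv Ha];
    destruct (rename_evctx V P HP) as [W [HW _]].
  - rewrite rename_plug_term, rename_plug; apply (om_step W), HW.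
  - rewrite !rename_plug_term; apply (oe_step W _ _ (rename_t f v)).
    + exact HW.
    + unfold lookup; rewrite es_rename_pctx; apply (in_map rename_pair _ (x, v)), Hl.
    + apply rename_value, Hv.
    + apply (rename_aeq []), Ha.
Qed.

Lemma aeq_var_rename_cons (G : list (var * var)) (x z : var) :
  (z <> x -> aeq_var G z (f z)) -> aeq_var ((x, f x) :: G) z (f z).
Proof.
  intro H; simpl; destruct (Nat.eq_dec z x) as [->|Hzx]; [left; auto|].
  right; repeat split; auto; intro Hf; apply f_inj in Hf; contradiction.
Qed.

Lemma aeq_rename_t (G : list (var * var)) (t : term) :
  (forall z, fv_t z t -> aeq_var G z (f z)) -> aeq G t (rename_t f t).
Proof.
  revert G; induction t as [x|x b IH|a IHa b IHb]; simpl; intros G H.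
  - apply H; reflexivity.
  - apply IH; intros z Hz; apply aeq_var_rename_cons; intro; apply H; auto.
  - split; [apply IHa | apply IHb]; auto.
Qed.

Lemma aeq_env_rename (G : list (var * var)) (t : term) (E : env) :
  (forall z, fv_env z t E -> aeq_var G z (f z)) ->
  aeq_env G t E (rename_t f t) (rename_env f E).
Proof.
  revert G; induction E as [|E IH x u]; simpl; intros G H.
  - apply aeq_rename_t, H.
  - split; [apply aeq_rename_t; auto|].
    apply IH; intros z Hz; apply aeq_var_rename_cons; auto.
Qed.

Lemma aeq_prog_rename (p : prog) :
  (forall z, fv_prog z p -> f z = z) -> aeq_prog p (rename_prog f p).
Proof.
  intro H; apply (aeq_env_rename []); intros z Hz; simpl; symmetry; apply H, Hz.
Qed.

End Renaming.

Lemma aeq_var_rename_eq (f : var -> var) (G : list (var * var)) (x y : var) :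
  aeq_var G x y -> (forall a b, In (a, b) G -> f a = b) ->
  (~ In x (map fst G) -> f x = x) -> f x = y.
Proof.
  revert x y; induction G as [|[a b] G IH]; simpl; intros x y H HG Hx.
  - subst; apply Hx; auto.
  - destruct H as [[-> ->]|[Hxa [Hyb H]]]; [apply HG; left; reflexivity|].
    apply IH; auto; intros Hn; apply Hx; intros [->|Hin]; auto.
Qed.

Lemma aeq_rename_eq (f : var -> var) (G : list (var * var)) (t t' : term) :
  aeq G t t' -> (forall a b, In (a, b) G -> f a = b) ->
  (forall z, fv_t z t -> ~ In z (map fst G) -> f z = z) ->
  map f (bv_t t) = bv_t t' -> rename_t f t = t'.
Proof.
  revert G t'; induction t as [x|x b IH|a IHa b IHb];
    intros G [y|y b'|a' b'] H HG Hfix Hbv; simpl in *; try contradiction.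
  - f_equal; eapply aeq_var_rename_eq; eauto.
  - injection Hbv as <- Hbv; f_equal; apply (IH ((x, f x) :: G)); auto.
    + intros a0 b0 [Hab|Hab]; [injection Hab as <- <-|]; auto.
    + intros z Hz Hn; apply Hfix; simpl in Hn; [split|]; auto.
  - destruct H as [Ha Hb]; rewrite map_app in Hbv.
    destruct (app_inj_length _ _ _ _ Hbv) as [Hbva Hbvb];
      [rewrite length_map; eapply aeq_length_bv; eauto|].
    f_equal; [eapply IHa | eapply IHb]; eauto.
Qed.

Lemma aeq_env_rename_eq (f : var -> var) (G : list (var * var)) (t t' : term) (E E' : env) :
  aeq_env G t E t' E' -> (forall a b, In (a, b) G -> f a = b) ->
  (forall z, fv_env z t E -> ~ In z (map fst G) -> f z = z) ->
  map f (bv_env E) = bv_env E' -> map f (bv_t t) = bv_t t' ->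
  rename_t f t = t' /\ rename_env f E = E'.
Proof.
  revert G t' E'; induction E as [|E IH x u];
    intros G t' [|E' y u'] H HG Hfix HbvE Hbvt; simpl in *; try contradiction.
  - split; [eapply aeq_rename_eq; eauto | reflexivity].
  - destruct H as [Hu HE]; injection HbvE as <- HbvE; rewrite map_app in HbvE.
    destruct (app_inj_length _ _ _ _ HbvE) as [Hbvu HbvE'];
      [rewrite length_map; eapply aeq_length_bv; eauto|].
    destruct (IH ((x, f x) :: G) t' E' HE) as [Ht HE'']; auto.
    + intros a b [Hab|Hab]; [injection Hab as <- <-|]; auto.
    + intros z Hz Hn; apply Hfix; simpl in Hn; [left; split|]; auto.
    + split; [exact Ht | rewrite HE''; f_equal; eapply aeq_rename_eq; eauto].
Qed.

Lemma well_named_aeq_rename (p0 p1 : prog) :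
  well_named p0 -> well_named p1 -> aeq_prog p0 p1 ->
  exists f, (forall x y, f x = f y -> x = y) /\ rename_prog f p0 = p1 /\
    forall z, fv_prog z p0 -> f z = z.
Proof.
  destruct p0 as [t0 E0], p1 as [t1 E1].
  intros [ND0 Hfv0] [ND1 Hfv1] H01; unfold aeq_prog, bv_prog in *; simpl in *.
  destruct (aeq_env_length_bv _ _ _ _ _ H01) as [Hlen_t Hlen_E].
  destruct (NoDup_map_onto (bv_t t0 ++ bv_env E0) (bv_t t1 ++ bv_env E1) ND0 ND1)
    as [f [f_inj [Hmap Hfix]]]; [rewrite !length_app; auto|].
  assert (Hfv : forall z, fv_prog z (t0, E0) -> f z = z).
  { intros z Hz; apply Hfix; intro Hin.
    - exact (Hfv0 z Hin Hz).
    - exact (Hfv1 z Hin (aeq_prog_fv (t0, E0) (t1, E1) z H01 Hz)). }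
  rewrite map_app in Hmap; destruct (app_inj_length _ _ _ _ Hmap) as [Hmap_t Hmap_E];
    [rewrite length_map; exact Hlen_t|].
  exists f; split; [exact f_inj | split; [|exact Hfv]].
  unfold rename_prog; simpl.
  destruct (aeq_env_rename_eq f [] t0 t1 E0 E1 H01) as [-> ->]; auto.
  intros a b [].
Qed.

Theorem mainTheorem2 (p q q' : prog) :
  ond p q -> ond p q' -> aeq_prog q q'.
Proof.
  intros [p0 [q0 [Hp0 [Hwn0 [Hstep0 Hq0]]]]] [p1 [q1 [Hp1 [Hwn1 [Hstep1 Hq1]]]]].
  assert (H01 : aeq_prog p0 p1) by (eapply aeq_prog_trans; [apply aeq_prog_sym|]; eauto).
  destruct (well_named_aeq_rename p0 p1 Hwn0 Hwn1 H01) as [f [f_inj [Hrn Hfix]]].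
  assert (Hstep0' : ond_raw p1 (rename_prog f q0))
    by (rewrite <- Hrn; apply (rename_ond_raw f f_inj), Hstep0).
  assert (Hq0_rn : aeq_prog q0 (rename_prog f q0))
    by (apply aeq_prog_rename;
        [exact f_inj | intros z Hz; apply Hfix, (fv_ond_raw p0 q0); auto]).
  assert (Hrn_q1 : aeq_prog (rename_prog f q0) q1)
    by (apply (ond_raw_det p1); assumption).
  apply (aeq_prog_trans _ q0); [apply aeq_prog_sym, Hq0|].
  apply (aeq_prog_trans _ (rename_prog f q0)); [exact Hq0_rn|].
  apply (aeq_prog_trans _ q1); assumption.
Qed.
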